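(* Let $p>0$ and let $(u_n)_{n\in\mathbb{Z}}$ be a real sequence such that $s_n:=u_{n+2}-u_n$ satisfies $\sum_{n=-\infty}^{\infty}|s_n-2p|<\infty$, and such that $x_n:=\frac{u_{n+1}-u_{n-1}}{2p}\neq 0$ for all $n\in\mathbb{Z}$. Define sequences $(\omega_j(n))_{n\in\mathbb{Z}}$, $j=1,2,\dots$, by $$\omega_1(n)=1-\frac{1}{x_n\,x_{n-1}},\qquad \omega_2(n)=\Bigl(1-\frac{1}{x_{n-1}\,x_{n-2}}\Bigr)\frac{1}{x_n\,x_{n-1}},$$ $$\omega_{j+1}(n)=\omega_j(n-1)-\sum_{k=1}^{j}\omega_k(n-1)\,\omega_{j+1-k}(n),\qquad j=2,3,\dots.$$ Then for every $j\ge 1$, $\omega_j(n)\to 0$ as $|n|\to\infty$.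
   Context: These $\omega_j$ are the coefficients of the series solution $\omega=x_n\bigl(1+\sum_{j\ge1}\omega_j\lambda^j\bigr)$, $|\lambda|<1$, of the discrete Riccati equation $\omega_n(\omega_{n+1}-x_{n+1})-\lambda x_{n+1}\omega_n+\lambda=0$ associated with the lattice potential KdV equation. *)

From HB Require Import structures.
From mathcomp Require Import all_boot all_order all_algebra.
From mathcomp Require Import all_classical all_reals all_analysis.
Set Implicit Arguments. Unset Strict Implicit. Unset Printing Implicit Defensive.
Import Order.TTheory GRing.Theory Num.Theory.
Import numFieldNormedType.Exports.
Local Open Scope ring_scope.

Section Omega.
Variables (R : realType) (u : int -> R) (p : R).

Definition xs (n : int) : R := (u (n + 1) - u (n - 1)) / (2 * p).

Definition ss (n : int) : R := u (n + 2) - u n.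

Definition om1 (n : int) : R := 1 - 1 / (xs n * xs (n - 1)).
Definition om2 (n : int) : R :=
  (1 - 1 / (xs (n - 1) * xs (n - 2))) * (1 / (xs n * xs (n - 1))).

(* oms m = [:: omega_1; ...; omega_m] (0-indexed list: entry i is omega_(i+1)) *)
Fixpoint oms (m : nat) : seq (int -> R) :=
  match m with
  | 0 => [::]
  | 1 => [:: om1]
  | 2 => [:: om1; om2]
  | (j.+2 as m').+1 =>
      let s := oms m' in
      (* omega_{j+3}(n) = omega_{j+2}(n-1)
                          - sum_{k=1}^{j+2} omega_k(n-1) omega_{j+3-k}(n) *)
      s ++ [:: fun n : int =>
                 nth (fun _ => 0) s j.+1 (n - 1)
                 - \sum_(i < j.+2)
                     nth (fun _ => 0) s i (n - 1)
                     * nth (fun _ => 0) s (j.+1 - i)%N n]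
  end.

Definition omega (j : nat) (n : int) : R := nth (fun _ => 0) (oms j) j.-1 n.

End Omega.

From HB Require Import structures.
From mathcomp Require Import all_boot all_order all_algebra.
From mathcomp Require Import all_classical all_reals all_analysis.
Set Implicit Arguments.
Unset Strict Implicit.
Unset Printing Implicit Defensive.

Import Order.TTheory GRing.Theory Num.Theory.
Import numFieldNormedType.Exports.
Local Open Scope classical_set_scope.
Local Open Scope ring_scope.

(* Summability of |s_n - 2p| forces s_n -> 2p as |n| -> oo, hence x_n -> 1 and
   omega_1, omega_2 -> 0.  Each omega_(j+1)(n) is a polynomial in shifted copies
   of omega_1, ..., omega_j without constant term, so by strong induction on j
   every omega_j tends to 0. *)

Section TwoSidedLimit.
Variable R : realType.

Definition cvg_pm_infty (f : int -> R) (l : R) : Prop :=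
  (fun n : nat => f n%:Z) @ \oo --> l /\ (fun n : nat => f (- n%:Z)) @ \oo --> l.

Lemma cvg_pm_inftyP (f : int -> R) (l : R) :
  (fun n : nat => f n%:Z) @ \oo --> l ->
  (fun n : nat => f (- n.+1%:Z)) @ \oo --> l -> cvg_pm_infty f l.
Proof.
move=> fpos fneg; split=> //.
by rewrite -(cvg_shiftn 1); under eq_fun do rewrite addn1.
Qed.

Lemma cvg_pm_infty_cst (a : R) : cvg_pm_infty (fun=> a) a.
Proof. by split; exact: cvg_cst. Qed.

Lemma cvg_pm_inftyD (f g : int -> R) (a b : R) :
  cvg_pm_infty f a -> cvg_pm_infty g b -> cvg_pm_infty (fun n => f n + g n) (a + b).
Proof. by move=> [f1 f2] [g1 g2]; split; [exact: cvgD f1 g1|exact: cvgD f2 g2]. Qed.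

Lemma cvg_pm_inftyB (f g : int -> R) (a b : R) :
  cvg_pm_infty f a -> cvg_pm_infty g b -> cvg_pm_infty (fun n => f n - g n) (a - b).
Proof. by move=> [f1 f2] [g1 g2]; split; [exact: cvgB f1 g1|exact: cvgB f2 g2]. Qed.

Lemma cvg_pm_inftyM (f g : int -> R) (a b : R) :
  cvg_pm_infty f a -> cvg_pm_infty g b -> cvg_pm_infty (fun n => f n * g n) (a * b).
Proof. by move=> [f1 f2] [g1 g2]; split; [exact: cvgM f1 g1|exact: cvgM f2 g2]. Qed.

Lemma cvg_pm_inftyV (f : int -> R) (a : R) :
  a != 0 -> cvg_pm_infty f a -> cvg_pm_infty (fun n => (f n)^-1) a^-1.
Proof. by move=> a0 [f1 f2]; split; [exact: cvgV a0 f1|exact: cvgV a0 f2]. Qed.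

Lemma cvg_pm_infty_sum (I : Type) (r : seq I) (F : I -> int -> R) :
  (forall i, cvg_pm_infty (F i) 0) -> cvg_pm_infty (fun n => \sum_(i <- r) F i n) 0.
Proof.
move=> F0; elim: r => [|i r IHr].
  have -> : (fun n => \sum_(i <- [::]) F i n) = fun=> 0.
    by apply/funext => n; rewrite big_nil.
  exact: cvg_pm_infty_cst.
have -> : (fun n => \sum_(j <- i :: r) F j n) = fun n => F i n + \sum_(j <- r) F j n.
  by apply/funext => n; rewrite big_cons.
by have := cvg_pm_inftyD (F0 i) IHr; rewrite addr0.
Qed.

Lemma cvg_pm_infty_shift (f : int -> R) (l : R) :
  cvg_pm_infty f l -> cvg_pm_infty (fun n => f (n - 1)) l.
Proof.
move=> [fpos fneg]; apply: cvg_pm_inftyP.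
  rewrite -(cvg_shiftn 1) /=.
  have -> : (fun n : nat => f ((n + 1)%N%:Z - 1)) = (fun n => f n%:Z).
    by apply/funext => n; rewrite PoszD addrK.
  exact: fpos.
have -> : (fun n : nat => f (- n.+1%:Z - 1)) = (fun n => f (- (n + 2)%N%:Z)).
  by apply/funext => n; rewrite -opprD -[n.+1]addn1 !PoszD -addrA.
by rewrite (cvg_shiftn 2 (fun n : nat => f (- n%:Z))).
Qed.

End TwoSidedLimit.

Lemma norm_le_cvg0 (R : realType) (f a : nat -> R) :
  (forall n, `|f n| <= a n) -> a @ \oo --> 0 -> f @ \oo --> 0.
Proof.
move=> fa a0; apply/cvgr0Pnorm_lt => e e0; near=> n.
apply: le_lt_trans (fa n) _; apply: le_lt_trans (ler_norm _) _.
by near: n; apply: cvgr0_norm_lt.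
Unshelve. all: by end_near.
Qed.

Lemma bounded_series_cvg0 (R : realType) (a : nat -> R) (M : R) :
  (forall n, 0 <= a n) -> (forall N, \sum_(i < N) a i <= M) -> a @ \oo --> 0.
Proof.
move=> a_ge0 aM; apply: cvg_series_cvg_0; apply: nondecreasing_is_cvgn.
  exact: (@nondecreasing_series _ a xpredT 0) => n _ _.
by exists M => _ [N _ <-]; rewrite /series /= big_mkord.
Qed.

Section Omega.
Variables (R : realType) (u : int -> R) (p : R).

Local Notation x := (xs u p).
Local Notation omega := (omega u p).
Local Notation nth_om := (nth (fun=> 0)).

Lemma size_oms m : size (oms u p m) = m.
Proof. by elim: m => [|[|[|m]]] // IHm; rewrite size_cat IHm addn1. Qed.

Lemma oms_rec j : oms u p j.+3 = rcons (oms u p j.+2) (fun n =>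
  nth_om (oms u p j.+2) j.+1 (n - 1)
  - \sum_(i < j.+2) nth_om (oms u p j.+2) i (n - 1) * nth_om (oms u p j.+2) (j.+1 - i) n).
Proof. by rewrite -cats1. Qed.

Lemma oms_rcons m : oms u p m.+1 = rcons (oms u p m) (omega m.+1).
Proof.
case: m => [|[|m]] //; rewrite /omega !oms_rec.
by rewrite nth_rcons size_oms ltnn eqxx.
Qed.

Lemma nth_oms m i : (i < m)%N -> nth_om (oms u p m) i = omega i.+1.
Proof.
elim: m => // m IHm; rewrite ltnS leq_eqVlt oms_rcons nth_rcons size_oms.
by case/predU1P => [->|lt_im]; rewrite ?ltnn ?eqxx // lt_im IHm.
Qed.

Lemma omega_rec j n : omega j.+3 n =
  omega j.+2 (n - 1) - \sum_(i < j.+2) omega i.+1 (n - 1) * omega (j.+2 - i) n.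
Proof.
rewrite {1}/omega oms_rec nth_rcons size_oms ltnn eqxx !nth_oms //.
congr (_ - _); apply: eq_bigr => i _.
have i_le : (i <= j.+1)%N := ltn_ord i.
by rewrite (subSn i_le) !nth_oms // ltnS leq_subr.
Qed.

Lemma omega_cvg0 :
  cvg_pm_infty (om1 u p) 0 -> cvg_pm_infty (om2 u p) 0 ->
  forall j, (0 < j)%N -> cvg_pm_infty (omega j) 0.
Proof.
move=> om1_0 om2_0 j; elim/ltn_ind: j => -[|[|[|j]]] // IHj _.
rewrite (funext (omega_rec j)) -[X in cvg_pm_infty _ X]subr0.
apply: cvg_pm_inftyB; first exact/cvg_pm_infty_shift/IHj.
apply: cvg_pm_infty_sum => i; rewrite -[X in cvg_pm_infty _ X](mulr0 0).
apply: cvg_pm_inftyM; first apply: cvg_pm_infty_shift; apply: IHj; rewrite ?subn_gt0 //.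
  by rewrite ltnS.
by rewrite ltnS leq_subr.
Qed.

Lemma xsE n : p != 0 -> x n = 1 + (ss u (n - 1) - 2 * p) / (2 * p).
Proof.
move=> p0; rewrite /xs /ss (_ : n - 1 + 2 = n + 1); last by rewrite -addrA.
have p2_neq0 : 2 * p != 0 by rewrite mulf_neq0.
by rewrite [in RHS]mulrBl (divff p2_neq0) [in RHS]addrC subrK.
Qed.

Lemma xs_cvg1 : p != 0 -> cvg_pm_infty (fun n => ss u n - 2 * p) 0 -> cvg_pm_infty x 1.
Proof.
move=> p0 s_2p; rewrite (funext (xsE^~ p0)).
have := cvg_pm_inftyD (cvg_pm_infty_cst 1)
  (cvg_pm_inftyM (cvg_pm_infty_shift s_2p) (cvg_pm_infty_cst (2 * p)^-1)).
by rewrite mul0r addr0.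
Qed.

Lemma om1_cvg0 : cvg_pm_infty x 1 -> cvg_pm_infty (om1 u p) 0.
Proof.
move=> x1; have -> : om1 u p = fun n => 1 - (x n * x (n - 1))^-1.
  by apply/funext => n; rewrite /om1 div1r.
have := cvg_pm_inftyM x1 (cvg_pm_infty_shift x1); rewrite mulr1 => xx1.
have := cvg_pm_inftyB (cvg_pm_infty_cst 1) (cvg_pm_inftyV (oner_neq0 R) xx1).
by rewrite invr1 subrr.
Qed.

Lemma om2E n : om2 u p n = om1 u p (n - 1) * (1 - om1 u p n).
Proof. by rewrite /om2 /om1 subKr -addrA. Qed.

Lemma om2_cvg0 : cvg_pm_infty (om1 u p) 0 -> cvg_pm_infty (om2 u p) 0.
Proof.
move=> om1_0; rewrite (funext om2E).
have := cvg_pm_inftyM (cvg_pm_infty_shift om1_0) (cvg_pm_inftyB (cvg_pm_infty_cst 1) om1_0).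
by rewrite mul0r.
Qed.

End Omega.

Theorem proposition1 (R : realType) (u : int -> R) (p : R) :
  0 < p ->
  (exists M : R, forall N : nat,
     \sum_(i < N) (`|ss u (i%:Z) - 2 * p| + `|ss u (- (i.+1)%:Z) - 2 * p|) <= M) ->
  (forall n : int, xs u p n != 0) ->
  forall j : nat, (1 <= j)%N ->
    (fun n : nat => omega u p j (n%:Z)) @ \oo --> 0 /\
    (fun n : nat => omega u p j (- (n%:Z))) @ \oo --> 0.
Proof.
move=> p_gt0 [M sum_leM] _ j j_gt0.
have terms_0 : (fun i : nat => `|ss u i - 2 * p| + `|ss u (- i.+1%:Z) - 2 * p|) @ \oo --> 0.
  by apply: bounded_series_cvg0 sum_leM => n; rewrite addr_ge0.
have s_2p : cvg_pm_infty (fun n => ss u n - 2 * p) 0.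
  by apply: cvg_pm_inftyP; apply: norm_le_cvg0 terms_0 => n; rewrite ?lerDl ?lerDr.
have x_1 := xs_cvg1 (lt0r_neq0 p_gt0) s_2p.
by have := omega_cvg0 (om1_cvg0 x_1) (om2_cvg0 (om1_cvg0 x_1)) j_gt0.
Qed.
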